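(* Let $R_1$ and $R_2$ be finite commutative local principal ideal rings with unity, and let $R=R_1\times R_2$. Suppose $\operatorname{diam}(\Gamma(R_1))\in\{1,2\}$ and $\operatorname{diam}(\Gamma(R_2))=2$. Then $\overline{\Gamma(R)}$ is not a divisor graph.
   Context: For a commutative ring $S$ with unity, $Z(S)$ denotes its set of zero divisors. The zero divisor graph $\Gamma(S)$ is the simple graph with vertex set $Z(S)\setminus\{0\}$, distinct $a,b$ adjacent iff $ab=0$; its complement $\overline{\Gamma(S)}$ has the same vertex set with distinct $a,b$ adjacent iff $ab\neq 0$. The diameter of a graph is the maximum distance (number of edges in a shortest path) between pairs of vertices. A ring is local if it has a unique maximal ideal. For a nonempty set $T$ of positive integers, the divisor graph $G(T)$ has vertex set $T$, with distinct $i,j$ adjacent iff $i\mid j$ or $j\mid i$; a graph is a divisor graph if it is isomorphic to some $G(T)$. *)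

From HB Require Import structures.
From mathcomp Require Import all_boot all_order all_algebra.
Set Implicit Arguments. Unset Strict Implicit. Unset Printing Implicit Defensive.
Import GRing.Theory.
Local Open Scope ring_scope.

HB.instance Definition _ (R1 R2 : finComNzRingType) := Finite.on (R1 * R2)%type.

Section RingDefs.
Variable S : finComNzRingType.

Definition zero_divisors : {set S} := [set a | [exists b, (b != 0) && (a * b == 0)]].

Definition zdg_vertices : {set S} := zero_divisors :\ 0.

Definition zdg_adj : rel S :=
  fun a b => [&& a \in zdg_vertices, b \in zdg_vertices, a != b & a * b == 0].

Definition zdg_compl_adj : rel S :=
  fun a b => [&& a \in zdg_vertices, b \in zdg_vertices, a != b & a * b != 0].

Definition is_ideal (I : {set S}) : Prop :=
  [/\ (0 : S) \in I,
      forall a b, a \in I -> b \in I -> a + b \in I &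
      forall r a, a \in I -> r * a \in I].

Definition is_maximal_ideal (I : {set S}) : Prop :=
  [/\ is_ideal I, (1 : S) \notin I &
      forall J : {set S}, is_ideal J -> I \subset J -> J = I \/ J = [set: S]].

Definition is_local_ring : Prop :=
  exists M : {set S}, is_maximal_ideal M /\
    forall N : {set S}, is_maximal_ideal N -> N = M.

Definition is_principal_ideal_ring : Prop :=
  forall I : {set S}, is_ideal I -> exists a : S, I = [set r * a | r : S].

End RingDefs.

Section GraphDefs.
Variable T : finType.
Variables (V : {set T}) (e : rel T).

(* within n x y : there is a walk of length at most n from x to y
   (adjacency e is only ever used between vertices of V here) *)
Fixpoint within (n : nat) (x y : T) : bool :=
  if n is n'.+1 then (x == y) || [exists z, [&& z \in V, e x z & within n' z y]]
  else x == y.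

Definition dist_eq (x y : T) (d : nat) : Prop :=
  within d x y /\ (forall k, (k < d)%N -> ~~ within k x y).

Definition diam_eq (d : nat) : Prop :=
  (forall x y, x \in V -> y \in V -> exists2 k, (k <= d)%N & dist_eq x y k) /\
  (exists x y, [/\ x \in V, y \in V & dist_eq x y d]).

(* divisor graph: isomorphic to G(T') for a nonempty set T' of positive integers.
   An isomorphism onto G(f @: V) is an injective map f : V -> positive integers
   such that distinct x, y are adjacent iff f x | f y or f y | f x. *)
Definition is_divisor_graph : Prop :=
  V != set0 /\
  exists f : T -> nat,
    [/\ {in V &, injective f},
        (forall x, x \in V -> (0 < f x)%N) &
        forall x y, x \in V -> y \in V -> x != y ->
          e x y = ((f x %| f y) || (f y %| f x))%N].

End GraphDefs.

Arguments zero_divisors S : clear implicits.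
Arguments zdg_vertices S : clear implicits.
Arguments zdg_adj S : clear implicits.
Arguments zdg_compl_adj S : clear implicits.
Arguments is_local_ring S : clear implicits.
Arguments is_principal_ideal_ring S : clear implicits.

From mathcomp Require Import all_boot all_order all_algebra.
From Stdlib Require Import Classical.
Set Implicit Arguments. Unset Strict Implicit. Unset Printing Implicit Defensive.
Import GRing.Theory.
Local Open Scope ring_scope.

(* A divisor graph is oriented by divisibility, and a vertex adjacent to two
   non-adjacent vertices must divide both or be divided by both, since
   otherwise transitivity would join them; along a path of consecutive
   non-adjacent neighbours this choice propagates.  In a triangle one label
   lies strictly between the other two, so not all three vertices can be
   forced.
   Take x1 x2 = 0 in R1 (x1, x2 <> 0), y1 y2 <> 0 for a pair at distance 2 in
   Gamma(R2), and w <> 0 annihilating Z(R2).  In the complement of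
   Gamma(R1 x R2) the triangle (0,1), (1,w), (x2,y1) is forced at (0,1)
   through (0,w), at (1,w) through (x1,0), and at (x2,y1) through (0,y2),
   (1,0). *)

Section DivisorLabelling.
Variables (T : finType) (V : {set T}) (e : rel T) (f : T -> nat).
Hypothesis e_irr : irreflexive e.
Hypothesis f_inj : {in V &, injective f}.
Hypothesis f_adj : forall x y, x \in V -> y \in V -> x != y ->
  e x y = ((f x %| f y) || (f y %| f x))%N.

Let adj_neq x y : e x y -> x != y.
Proof. by apply: contraTneq => ->; rewrite e_irr. Qed.

Lemma dvdn_adj_flip a b : a \in V -> b \in V -> e a b ->
  (f b %| f a)%N = ~~ (f a %| f b)%N.
Proof.
move=> aV bV ab; have a_neq_b := adj_neq ab; move: ab.
rewrite f_adj //; case ab: (f a %| f b)%N; case ba: (f b %| f a)%N => //= _.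
by case/eqP: a_neq_b; apply: f_inj => //; apply/eqP; rewrite eqn_dvd ab ba.
Qed.

Lemma dvdn_nonadj_neighbours a b c : a \in V -> b \in V -> c \in V ->
  e a b -> e a c -> ~~ e b c -> (f a %| f b)%N = (f a %| f c)%N.
Proof.
move=> aV bV cV ab ac; have [-> _ // | b_neq_c] := eqVneq b c.
have [a_neq_b a_neq_c] := (adj_neq ab, adj_neq ac).
rewrite f_adj // negb_or => /andP[nbc ncb].
rewrite !f_adj // in ab ac.
apply/idP/idP => [a_b | a_c].
- by case/orP: ac => // c_a; rewrite (dvdn_trans c_a a_b) in ncb.
- by case/orP: ab => // b_a; rewrite (dvdn_trans b_a a_c) in nbc.
Qed.

Lemma dvdn_nonadj_path a b s : a \in V -> all [in V] (b :: s) ->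
  all (e a) (b :: s) -> path (fun u v => ~~ e u v) b s ->
  (f a %| f b)%N = (f a %| f (last b s))%N.
Proof.
move=> aV; elim: s b => [// | c s IH] b /= /and3P[bV cV sV] /and3P[ab ac es].
case/andP=> nbc cs; rewrite (dvdn_nonadj_neighbours aV bV cV ab ac nbc).
by apply: IH; rewrite //= ?cV ?ac.
Qed.

Lemma dvdn_triangle_middle p q s : p \in V -> q \in V -> s \in V ->
  e p q -> e q s -> e s p ->
  [|| (f p %| f q)%N != (f p %| f s)%N, (f q %| f p)%N != (f q %| f s)%N
    | (f s %| f q)%N != (f s %| f p)%N].
Proof.
move=> pV qV sV pq qs sp.
rewrite (dvdn_adj_flip pV qV pq) (dvdn_adj_flip qV sV qs) (dvdn_adj_flip sV pV sp).
by case: (f p %| f q)%N; case: (f q %| f s)%N; case: (f s %| f p)%N.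
Qed.

End DivisorLabelling.

Section Diameter.
Variables (T : finType) (V : {set T}) (e : rel T).

Lemma diam_eq_edge d : (0 < d)%N -> diam_eq V e d ->
  exists x y, [/\ x \in V, y \in V & e x y].
Proof.
case: d => [// | d] _ [_ [x [y [xV yV [xy /(_ 0%N isT) x_neq_y]]]]].
move: xy x_neq_y => /= /orP[/eqP -> |]; first by rewrite eqxx.
move=> /existsP[z /and3P[zV xz _]].
by exists x, z.
Qed.

Lemma diam_eq2_nonadj : diam_eq V e 2 ->
  exists x y, [/\ x \in V, y \in V, x != y & ~~ e x y].
Proof.
case=> _ [x [y [xV yV [_ far]]]].
have /= := far 1%N isT; rewrite negb_or => /andP[x_neq_y /existsP no_walk].
exists x, y; split => //; apply/negP => xy.
by apply: no_walk; exists y; rewrite yV xy eqxx.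
Qed.

End Diameter.

Section ZeroDivisorGraph.
Variable S : finComNzRingType.

Lemma zero_divisor_mul (a b : S) : b != 0 -> a * b = 0 -> a \in zero_divisors S.
Proof.
by move=> b_neq0 ab; rewrite inE; apply/existsP; exists b; rewrite b_neq0 ab eqxx.
Qed.

Lemma zero_divisor0 : 0 \in zero_divisors S.
Proof. exact: zero_divisor_mul (oner_neq0 S) (mul0r 1). Qed.

Lemma zdg_vertex_neq0 (a : S) : a \in zdg_vertices S -> a != 0.
Proof. by rewrite in_setD1 => /andP[]. Qed.

Lemma zdg_vertex_zero_divisor (a : S) :
  a \in zdg_vertices S -> a \in zero_divisors S.
Proof. by rewrite in_setD1 => /andP[]. Qed.

Lemma zdg_adj_mul_eq0 (a b : S) : zdg_adj S a b ->
  [/\ a != 0, b != 0 & a * b = 0].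
Proof.
by case/and4P=> aV bV _ /eqP ab; split; rewrite ?zdg_vertex_neq0.
Qed.

Lemma zdg_nonadj_mul_neq0 (a b : S) :
  a \in zdg_vertices S -> b \in zdg_vertices S -> a != b ->
  ~~ zdg_adj S a b -> a * b != 0.
Proof. by move=> aV bV a_neq_b; rewrite /zdg_adj aV bV a_neq_b. Qed.

Lemma zdg_compl_adj_irr : irreflexive (zdg_compl_adj S).
Proof. by move=> a; rewrite /zdg_compl_adj eqxx !andbF. Qed.

End ZeroDivisorGraph.

Section LocalPrincipalIdealRing.
Variable S : finComNzRingType.

Lemma ideal_eqT (I : {set S}) : is_ideal I -> 1 \in I -> I = setT.
Proof.
case=> _ _ I_mul I1; apply/setP => r; rewrite inE.
by rewrite -[r]mulr1 I_mul.
Qed.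

Lemma is_ideal_principal (a : S) : is_ideal [set r * a | r : S].
Proof.
split.
- by apply/imsetP; exists 0; rewrite ?mul0r.
- move=> _ _ /imsetP[r _ ->] /imsetP[r' _ ->].
  by apply/imsetP; exists (r + r'); rewrite ?mulrDl.
- move=> r _ /imsetP[r' _ ->].
  by apply/imsetP; exists (r * r'); rewrite ?mulrA.
Qed.

Lemma proper_ideal_sub_maximal (I : {set S}) : is_ideal I -> 1 \notin I ->
  exists2 M, is_maximal_ideal M & I \subset M.
Proof.
move: {2}#|~: I| (leqnn #|~: I|) => n; elim: n I => [|n IH] I cardI I_ideal I1.
  by move: cardI; rewrite leqn0 cards_eq0 => /eqP/setP/(_ 1); rewrite !inE I1.
have [I_max | I_not_max] := classic (is_maximal_ideal I); first by exists I.
have [J [J_ideal IJ J_neq_I J_neqT]] :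
    exists J, [/\ is_ideal J, I \subset J, J <> I & J <> setT].
  apply: NNPP => noJ; apply: I_not_max; split=> // J J_ideal IJ.
  by apply: NNPP => /not_or_and[? ?]; apply: noJ; exists J.
have J1 : 1 \notin J by apply/negP => /(ideal_eqT J_ideal).
have cJ_cI : ~: J \proper ~: I.
  by rewrite properC properEneq IJ andbT eq_sym; apply/eqP.
have [M M_max JM] := IH J (leq_trans (proper_card cJ_cI) cardI) J_ideal J1.
by exists M => //; apply: subset_trans JM.
Qed.

Lemma nonunit_zero_divisor (t : S) : ~ (exists u, t * u = 1) ->
  t \in zero_divisors S.
Proof.
move=> t_nonunit; apply: contraT => t_regular; case: t_nonunit.
have mul_t_inj : injective ( *%R t).
  move=> a b tab; apply/eqP; rewrite -subr_eq0; apply: contraNT t_regular => ab.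
  by rewrite inE; apply/existsP; exists (a - b); rewrite ab mulrBr tab subrr eqxx.
have [g _ gK] := injF_bij mul_t_inj.
by exists (g 1); rewrite gK.
Qed.

Lemma local_zero_divisors_sub (M : {set S}) :
  (forall N, is_maximal_ideal N -> N = M) -> zero_divisors S \subset M.
Proof.
move=> M_uniq; apply/subsetP => z; rewrite inE => /existsP[b /andP[b_neq0 /eqP zb]].
have z1 : 1 \notin [set r * z | r : S].
  apply/negP => /imsetP[u _ u1]; move/eqP: b_neq0; apply.
  by rewrite -[b]mul1r u1 -mulrA zb mulr0.
have [N N_max zN] := proper_ideal_sub_maximal (is_ideal_principal z) z1.
rewrite -(M_uniq N N_max); apply: (subsetP zN).
by apply/imsetP; exists 1; rewrite ?mul1r.
Qed.

(* Z(S) is the maximal ideal (t), and t, being a non-unit, is a zero divisor. *)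
Lemma local_pir_zero_divisors_annihilator :
  is_local_ring S -> is_principal_ideal_ring S ->
  exists2 w : S, w != 0 & forall z, z \in zero_divisors S -> z * w = 0.
Proof.
move=> [M [[M_ideal M1 _] M_uniq]] pir; have [t Mt] := pir M M_ideal.
have t_nonunit : ~ exists u, t * u = 1.
  by case=> u tu; case/negP: M1; rewrite Mt; apply/imsetP; exists u; rewrite // mulrC.
move: (nonunit_zero_divisor t_nonunit); rewrite inE.
case/existsP=> w /andP[w_neq0 /eqP tw]; exists w => // z.
move/(subsetP (local_zero_divisors_sub M_uniq)); rewrite Mt => /imsetP[r _ ->].
by rewrite -mulrA tw mulr0.
Qed.

End LocalPrincipalIdealRing.

Section ProductRing.
Variables R1 R2 : finComNzRingType.
Local Notation R := (R1 * R2)%type.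

Lemma pair_eq0 (a1 : R1) (a2 : R2) : ((a1, a2) == 0 :> R) = (a1 == 0) && (a2 == 0).
Proof. exact: xpair_eqE. Qed.

Lemma zero_divisors_prod (a1 : R1) (a2 : R2) :
  ((a1, a2) \in zero_divisors R) = (a1 \in zero_divisors R1) || (a2 \in zero_divisors R2).
Proof.
rewrite !inE; apply/existsP/orP => [[[b1 b2]] | ].
  rewrite pair_eq0 negb_and xpair_eqE => /andP[/orP[b1_neq0 | b2_neq0] /andP[ab1 ab2]].
  - by left; apply/existsP; exists b1; rewrite b1_neq0.
  - by right; apply/existsP; exists b2; rewrite b2_neq0.
case=> /existsP[b /andP[b_neq0 ab]]; [exists (b, 0) | exists (0, b)];
  by rewrite pair_eq0 negb_and b_neq0 ?orbT xpair_eqE ab ?mulr0 eqxx.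
Qed.

Lemma zdg_vertices_prod (a1 : R1) (a2 : R2) :
  ((a1, a2) \in zdg_vertices R) =
  ~~ ((a1 == 0) && (a2 == 0)) && ((a1 \in zero_divisors R1) || (a2 \in zero_divisors R2)).
Proof. by rewrite in_setD1 pair_eq0 zero_divisors_prod. Qed.

Lemma zdg_compl_adj_prod (a1 b1 : R1) (a2 b2 : R2) :
  zdg_compl_adj R (a1, a2) (b1, b2) =
  [&& (a1, a2) \in zdg_vertices R, (b1, b2) \in zdg_vertices R,
      ~~ ((a1 == b1) && (a2 == b2)) & ~~ ((a1 * b1 == 0) && (a2 * b2 == 0))].
Proof. by rewrite /zdg_compl_adj xpair_eqE -pair_eq0. Qed.

End ProductRing.

Section ComplementConfiguration.
Variables (R1 R2 : finComNzRingType) (x1 x2 : R1) (y1 y2 w : R2).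
Hypotheses (x1_neq0 : x1 != 0) (x2_neq0 : x2 != 0) (x1x2 : x1 * x2 = 0).
Hypotheses (y1y2_neq0 : y1 * y2 != 0) (w_neq0 : w != 0).
Hypotheses (y1w : y1 * w = 0) (y2w : y2 * w = 0) (ww : w * w = 0).
Local Notation V := (zdg_vertices (R1 * R2)%type).
Local Notation E := (zdg_compl_adj (R1 * R2)%type).

Lemma compl_zdg_prod_not_divisor_graph : ~ is_divisor_graph V E.
Proof.
case=> _ [f [f_inj _ f_adj]].
have dvdn_path := dvdn_nonadj_path (@zdg_compl_adj_irr _) f_adj.
have [y1_neq0 y2_neq0] : y1 != 0 /\ y2 != 0.
  by split; apply: contraNneq y1y2_neq0 => ->; rewrite ?mul0r ?mulr0.
have w_neq1 : w != 1 by apply: contraNneq w_neq0 => w1; rewrite -[w]mulr1 -w1 ww.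
have y1_neq_w : y1 != w by apply: contraNneq y1y2_neq0 => ->; rewrite mulrC y2w.
have [y1Z wZ] := (zero_divisor_mul w_neq0 y1w, zero_divisor_mul w_neq0 ww).
have neqE (T : eqType) (a b : T) : a != b -> ((a == b) = false) * ((b == a) = false).
  by move=> a_neq_b; split; last rewrite eq_sym; apply/negbTE.
have config := (zdg_compl_adj_prod, zdg_vertices_prod, zero_divisor0, wZ, y1Z,
  mulrC w y1, mulrC w y2, mulrC x2 x1, y1w, y2w, ww, x1x2, negbTE y1y2_neq0,
  mul0r, mulr0, mul1r, mulr1, eqxx, orbT, andbT, andbF,
  (neqE _ _ _ x1_neq0, neqE _ _ _ x2_neq0, neqE _ _ _ (@oner_neq0 R1)),
  (neqE _ _ _ y1_neq0, neqE _ _ _ y2_neq0, neqE _ _ _ w_neq0, neqE _ _ _ (@oner_neq0 R2)),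
  (neqE _ _ _ w_neq1, neqE _ _ _ y1_neq_w)).
pose p : (R1 * R2)%type := (0, 1).
pose q : (R1 * R2)%type := (1, w).
pose s : (R1 * R2)%type := (x2, y1).
have p_forced : (f p %| f s)%N = (f p %| f q)%N.
  by apply: (dvdn_path p s [:: (0, w); q]);
    rewrite /p /q /s /= ?config.
have q_forced : (f q %| f p)%N = (f q %| f s)%N.
  by apply: (dvdn_path q p [:: (x1, 0); s]);
    rewrite /p /q /s /= ?config.
have s_forced : (f s %| f q)%N = (f s %| f p)%N.
  by apply: (dvdn_path s q [:: (0, y2); (1, 0); p]);
    rewrite /p /q /s /= ?config.
have [pV qV sV] : [/\ p \in V, q \in V & s \in V].
  by split; rewrite /p /q /s /= ?config.
have [pq qs sp] : [/\ E p q, E q s & E s p].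
  by split; rewrite /p /q /s /= ?config.
have := dvdn_triangle_middle (@zdg_compl_adj_irr _) f_inj f_adj pV qV sV pq qs sp.
by rewrite p_forced q_forced s_forced !eqxx.
Qed.

End ComplementConfiguration.

Theorem theorem2p6 (R1 R2 : finComNzRingType) :
  is_local_ring R1 -> is_principal_ideal_ring R1 ->
  is_local_ring R2 -> is_principal_ideal_ring R2 ->
  (diam_eq (zdg_vertices R1) (zdg_adj R1) 1 \/
   diam_eq (zdg_vertices R1) (zdg_adj R1) 2) ->
  diam_eq (zdg_vertices R2) (zdg_adj R2) 2 ->
  ~ is_divisor_graph (zdg_vertices (R1 * R2)%type) (zdg_compl_adj (R1 * R2)%type).
Proof.
move=> _ _ R2_local R2_pir R1_diam R2_diam.
have [x1 [x2 [_ _ /zdg_adj_mul_eq0[x1_neq0 x2_neq0 x1x2]]]] :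
    exists x1 x2, [/\ x1 \in zdg_vertices R1, x2 \in zdg_vertices R1 & zdg_adj R1 x1 x2].
  by case: R1_diam; apply: diam_eq_edge.
have [y1 [y2 [y1V y2V y1_neq_y2 /(zdg_nonadj_mul_neq0 y1V y2V y1_neq_y2) y1y2_neq0]]] :=
  diam_eq2_nonadj R2_diam.
have [w w_neq0 w_ann] := local_pir_zero_divisors_annihilator R2_local R2_pir.
have y1w := w_ann y1 (zdg_vertex_zero_divisor y1V).
have y2w := w_ann y2 (zdg_vertex_zero_divisor y2V).
have ww : w * w = 0.
  by apply/w_ann/(zero_divisor_mul (zdg_vertex_neq0 y1V)); rewrite mulrC.
exact: compl_zdg_prod_not_divisor_graph x1_neq0 x2_neq0 x1x2 y1y2_neq0 w_neq0 y1w y2w ww.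
Qed.
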